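(* Let $\mathcal{T}^{pl}$ be the vector space spanned by the set $T^{pl}$ of planar rooted trees, $\mathcal{T}$ the vector space spanned by the set $T$ of (non-planar) rooted trees, $\pi:\mathcal{T}^{pl}\to\mathcal{T}$ the linear ''forget planarity'' projection, and $\Psi:\mathcal{T}^{pl}\to\mathcal{T}^{pl}$ the linear map with $\Psi(\bullet)=\bullet$ and $\Psi(\sigma_1\circ\!\!\searrow\sigma_2)=\Psi(\sigma_1)\searrow\Psi(\sigma_2)$ for all planar rooted trees $\sigma_1,\sigma_2$. Put $\overline{\Psi}=\pi\circ\Psi$. Then for every planar rooted tree $\tau$, $$\overline{\Psi}(\tau)=\sum_{s\in T}\alpha(s,\tau)\,s,$$ where the coefficients $\alpha(s,\tau)$ are nonnegative integers, and $$\alpha(s,\tau)=\overline{b}(s,\tau):=\frac{\tilde b(s,\tau)}{sym(s)},$$ where $sym(s)$ is the symmetry factor of $s$ and $\tilde b(s,\tau)$ is the number of bijections $\varphi:V(s)\to V(\tau)$ which are increasing from $(V(s),<)$ into $(V(\tau),\lll)$ and such that $\varphi^{-1}$ is increasing from $(V(\tau),<)$ into $(V(s),<)$.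
   Context: A rooted tree is a finite oriented tree with a distinguished vertex (the root) having no outgoing edge, every other vertex having exactly one outgoing edge; it is planar if endowed with an embedding in the plane (so the branches at each vertex are ordered left to right). $\bullet$ denotes the one-vertex tree. $V(\sigma)$ is the vertex set of a tree $\sigma$. Every planar rooted tree is $B_+(\tau_1\cdots\tau_k)$, obtained by connecting the roots of the ordered list of planar trees $\tau_1,\dots,\tau_k$ to a new root. The left Butcher product is $\sigma\circ\!\!\searrow\tau:=B_+(\sigma\tau_1\cdots\tau_k)$ when $\tau=B_+(\tau_1\cdots\tau_k)$ (graft the root of $\sigma$ as the new leftmost branch at the root of $\tau$); every planar rooted tree with at least two vertices is uniquely of the form $\sigma_1\circ\!\!\searrow\sigma_2$, so $\Psi$ is well defined recursively. The left grafting is the bilinear product $\sigma\searrow\tau=\sum_{v\in V(\tau)}\sigma\searrow_v\tau$, where $\sigma\searrow_v\tau$ is obtained by grafting the root of $\sigma$ onto the vertex $v$ of $\tau$ so that $\sigma$ becomes the leftmost branch at $v$. Partial order $<$ on the vertices of a tree: $v<w$ if $v\neq w$ and the path from the root to $w$ passes through $v$. Total order $\lll$ on $V(\tau)$ for a planar tree $\tau$, defined recursively: for $\tau=\tau_1\circ\!\!\searrow\tau_2$, $v\lll w$ iff ($v\lll w$ inside $V(\tau_1)$ or inside $V(\tau_2)$) or ($v\in V(\tau_2)$ and $w\in V(\tau_1)$). A map $f$ is increasing from $(A,\prec_A)$ into $(B,\prec_B)$ if $a\prec_A a'$ implies $f(a)\prec_B f(a')$. The symmetry factor $sym(s)$ of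 a non-planar rooted tree $s$ is the number of bijections $V(s)\to V(s)$ which are increasing from $(V(s),<)$ onto $(V(s),<)$ (i.e. tree automorphisms). *)

From mathcomp Require Import all_boot all_order all_algebra.
Set Implicit Arguments. Unset Strict Implicit. Unset Printing Implicit Defensive.

Inductive ptree := Node of seq ptree.

Definition bullet : ptree := Node [::].

(* Left Butcher product: s o\ Node l = Node (s :: l).  Every tree with >= 2
   vertices is uniquely  c o\ Node cs  when it is Node (c :: cs). *)
Definition lbutcher (s t : ptree) : ptree := let: Node l := t in Node (s :: l).

(* Vertices are addressed by paths from the root: [::] is the root, and
   i :: p is vertex p of the i-th (0-based, from the left) branch. *)
Definition address := seq nat.

Definition shift_addr (p : address) : address :=
  if p is i :: q then i.+1 :: q else [::].

(* The vertices of a planar tree listed in the total order <<< , following the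
   recursive definition: for tau = tau1 o\ tau2, first the vertices of tau2,
   then those of tau1 (each internally ordered recursively).  For
   tau = Node (c :: cs): tau1 = c (addresses 0 :: p), tau2 = Node cs (its
   address i :: q corresponds to i.+1 :: q in tau, its root to the root). *)
Fixpoint verts (t : ptree) : seq address :=
  let fix go (l : seq ptree) : seq address :=
    if l is c :: cs then map shift_addr (go cs) ++ map (cons 0) (verts c)
    else [:: [::]] in
  let: Node l := t in go l.

Fixpoint graft_at (s t : ptree) (p : address) {struct p} : ptree :=
  let: Node l := t in
  match p with
  | [::] => Node (s :: l)
  | i :: p' => Node [seq (if x.1 == i then graft_at s x.2 p' else x.2)
                    | x <- zip (iota 0 (size l)) l]
  end.

(* Linear combinations with nonnegative integer coefficients of planar trees
   are represented as multisets (lists) of planar trees. *)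
Definition lgraft (s t : ptree) : seq ptree := [seq graft_at s t v | v <- verts t].

Definition lgraft_lin (A B : seq ptree) : seq ptree :=
  flatten [seq lgraft a b | a <- A, b <- B].

Fixpoint Psi (t : ptree) : seq ptree :=
  let fix go (l : seq ptree) : seq ptree :=
    if l is c :: cs then lgraft_lin (Psi c) (go cs) else [:: bullet] in
  let: Node l := t in go l.

Definition V (t : ptree) := 'I_(size (verts t)).
Definition vtx (t : ptree) (i : V t) : address := nth [::] (verts t) i.
Arguments vtx : clear implicits.

Definition strict_prefix (v w : address) : bool :=
  (size v < size w) && (take (size v) w == v).
Definition anc (t : ptree) (i j : V t) : bool := strict_prefix (vtx t i) (vtx t j).
Arguments anc : clear implicits.

Definition lll (t : ptree) (i j : V t) : bool :=
  index (vtx t i) (verts t) < index (vtx t j) (verts t).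
Arguments lll : clear implicits.

Definition increasing (A B : finType) (ra : rel A) (rb : rel B) (f : A -> B) :=
  [forall a, forall a', ra a a' ==> rb (f a) (f a')].

Definition bijb (A B : finType) (f : A -> B) :=
  injectiveb f && [forall b, exists a, f a == b].

Definition inv_increasing (A B : finType) (rb : rel B) (ra : rel A) (f : A -> B) :=
  [forall x, forall y, rb x y ==>
     [forall a, forall a', ((f a == x) && (f a' == y)) ==> ra a a']].

(* Two planar trees represent the same non-planar rooted tree iff there is a
   bijection of vertices which is an isomorphism of the ancestor orders. *)
Definition np_iso (s t : ptree) : bool :=
  [exists f : {ffun V s -> V t},
     [&& bijb f, increasing (@anc s) (@anc t) f & inv_increasing (@anc t) (@anc s) f]].

Definition sym (s : ptree) : nat :=
  #|[pred f : {ffun V s -> V s} | bijb f && increasing (@anc s) (@anc s) f]|.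

Definition btilde (s tau : ptree) : nat :=
  #|[pred f : {ffun V s -> V tau} |
      [&& bijb f, increasing (@anc s) (@lll tau) f
        & inv_increasing (@anc tau) (@anc s) f]]|.

(* alpha(s, tau): coefficient of the non-planar tree (represented by) s in
   pi(Psi(tau)). *)
Definition alpha (s tau : ptree) : nat := count (fun u => np_iso u s) (Psi tau).

(* The terms of Psi(tau) correspond one-to-one to the admissible orders on the
   vertices of tau: the tree orders containing the ancestor order of tau and
   contained in <<<, each term having an ancestor order isomorphic to its
   admissible order.  This is proved by induction along tau = c o\ Node cs: a
   term of Psi(tau) is a term of Psi(c) grafted onto a vertex of a term of
   Psi(Node cs), while an admissible order on tau is determined by its
   restrictions to c and to Node cs and by the largest vertex of Node cs below
   the root of c.  The bijections counted by btilde(s, tau) are exactly those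
   carrying the ancestor order of s onto an admissible order, and there are
   sym(s) of them for an admissible order isomorphic to the ancestor order of s
   and none otherwise; summing over the terms of Psi(tau) gives
   btilde(s, tau) = alpha(s, tau) sym(s). *)

From mathcomp Require Import all_boot all_order all_algebra zify.
From Stdlib Require Import ClassicalEpsilon.
From Stdlib Require Import List(Forall, Forall_app, Forall_impl).

Set Implicit Arguments. Unset Strict Implicit. Unset Printing Implicit Defensive.
Import GRing.Theory Num.Theory.

Lemma Forall_flatten T (P : T -> Prop) (ss : seq (seq T)) :
  Forall (Forall P) ss -> Forall P (flatten ss).
Proof. by elim=> //= s ss' Ps _ IH; apply/Forall_app. Qed.

Lemma Forall_allpairs S T U (P : S -> Prop) (Q : T -> Prop) (W : U -> Prop)
    (f : S -> T -> U) s t :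
  (forall x y, P x -> Q y -> W (f x y)) -> Forall P s -> Forall Q t ->
  Forall W [seq f x y | x <- s, y <- t].
Proof.
move=> PQW Ps Qt; apply: Forall_flatten; elim: Ps => //= x s' Px _ IH.
by constructor=> //; elim: Qt => //= y t' Qy _ IHt; constructor; [exact: PQW|].
Qed.

Lemma Forall_map_in (T : eqType) U (P : U -> Prop) (f : T -> U) s :
  (forall x, x \in s -> P (f x)) -> Forall P (map f s).
Proof.
elim: s => //= x s IH Pf; constructor; first by apply: Pf; exact: mem_head.
by apply: IH => y y_in; apply: Pf; rewrite inE y_in orbT.
Qed.

Lemma eq_big_Forall (R I : Type) (idx : R) (op : R -> R -> R) (F G : I -> R) s :
  Forall (fun i => F i = G i) s -> \big[op/idx]_(i <- s) F i = \big[op/idx]_(i <- s) G i.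
Proof. by elim=> [|i s' Fi _ IH]; rewrite ?big_nil // !big_cons Fi IH. Qed.

Lemma count_sum T (P : pred T) s : count P s = \sum_(x <- s) P x.
Proof. by rewrite -sum1_count big_mkcond. Qed.

Lemma map_index_iota (T : eqType) (s : seq T) : uniq s -> map (index^~ s) s = iota 0 (size s).
Proof.
case: s => [//|x0 s'] s_uniq; set s := x0 :: s' in s_uniq *.
rewrite -{2}(mkseq_nth x0 s) /mkseq -map_comp -[RHS]map_id.
by apply/eq_in_map => i; rewrite mem_iota add0n => lti; apply: index_uniq.
Qed.

Lemma count_index_bij (T : eqType) (s : seq T) n (f g : nat -> nat) (P : pred nat) :
  uniq s -> size s = n -> (forall i, i < n -> f i < n) -> (forall i, i < n -> g i < n) ->
  (forall i, i < n -> g (f i) = i) -> (forall i, i < n -> f (g i) = i) ->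
  count (fun x => P (f (index x s))) s = count P (iota 0 n).
Proof.
move=> s_uniq <- Df Dg fK gK.
rewrite -[LHS](count_map (index^~ s) (P \o f)) map_index_iota // -count_map.
apply/permP/uniq_perm; rewrite ?iota_uniq //.
  rewrite map_inj_in_uniq ?iota_uniq // => i j; rewrite !mem_iota !add0n => lti ltj eqf.
  by rewrite -(fK i) // eqf fK.
move=> i; rewrite mem_iota add0n; apply/mapP/idP => [[j]|lti].
  by rewrite mem_iota add0n => /Df ltf ->.
by exists (g i); rewrite ?mem_iota ?add0n ?Dg ?gK.
Qed.

Lemma bijbP (A B : finType) (f : A -> B) : reflect (bijective f) (bijb f).
Proof.
apply: (iffP andP) => [[/injectiveP f_inj /forallP f_surj]|[g fK gK]].
  have pre b : exists a, f a == b by apply/existsP.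
  by exists (fun b => xchoose (pre b)) => [a|b]; [apply: f_inj|]; apply/eqP/(xchooseP (pre _)).
split; first exact/injectiveP/(can_inj fK).
by apply/forallP => b; apply/existsP; exists (g b); rewrite gK.
Qed.

Definition isos (C A : finType) (RC : rel C) (RA : rel A) :=
  [pred phi : {ffun C -> A} | bijb phi && [forall a, forall b, RC a b == RA (phi a) (phi b)]].

Lemma isos_comp (C A B : finType) (RC : rel C) (RA : rel A) (RB : rel B) (k : A -> B) phi :
  bijective k -> {mono k : x y / RA x y >-> RB x y} -> phi \in isos RC RA ->
  [ffun c => k (phi c)] \in isos RC RB.
Proof.
move=> [k' kK k'K] k_mono; rewrite !inE => /andP [/bijbP [phi' phiK phi'K] /forallP phi_iso].
apply/andP; split.
  by apply/bijbP; exists (phi' \o k') => [c|b]; rewrite /= ffunE ?kK ?phiK ?phi'K ?k'K.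
by apply/forallP => a; apply/forallP => b; rewrite !ffunE k_mono; exact: (forallP (phi_iso a)).
Qed.

Lemma card_isos_mono (C A B : finType) (RC : rel C) (RA : rel A) (RB : rel B) (k : A -> B) :
  bijective k -> {mono k : x y / RA x y >-> RB x y} -> #|isos RC RA| = #|isos RC RB|.
Proof.
move=> k_bij k_mono; have [k' kK k'K] := k_bij.
have k'_mono : {mono k' : x y / RB x y >-> RA x y} by move=> x y; rewrite -k_mono !k'K.
pose post (phi : {ffun C -> A}) := [ffun c => k (phi c)].
have post_inj : injective post.
  move=> phi psi /ffunP eq_post; apply/ffunP => c.
  by have := eq_post c; rewrite !ffunE => /(can_inj kK).
rewrite -(card_image post_inj); apply: eq_card => psi; apply/imageP/idP => [[phi phi_in ->]|psi_in].
  exact: isos_comp.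
exists [ffun c => k' (psi c)]; first by apply: isos_comp psi_in => //; exists k.
by apply/ffunP => c; rewrite !ffunE k'K.
Qed.

Lemma increasing_inv_increasingE (A B : finType) (ra : rel A) (rb : rel B) (f : A -> B) :
  increasing ra rb f && inv_increasing rb ra f = [forall a, forall b, ra a b == rb (f a) (f b)].
Proof.
apply/idP/forallP => [/andP [/forallP f_incr /forallP f_inv] a|f_iso].
  apply/forallP => b; apply/eqP; apply/idP/idP => [|rb_fab].
    exact/implyP/(forallP (f_incr a)).
  have /implyP /(_ rb_fab) /forallP /(_ a) /forallP /(_ b) /implyP := forallP (f_inv (f a)) (f b).
  by apply; rewrite !eqxx.
apply/andP; split; apply/forallP => x; apply/forallP => y; apply/implyP => rxy.
  by rewrite -(eqP (forallP (f_iso x) y)).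
apply/forallP => a; apply/forallP => b; apply/implyP => /andP [/eqP fa /eqP fb].
by rewrite (eqP (forallP (f_iso a) b)) fa fb.
Qed.

Lemma fin_homo_mono (C : finType) (R : rel C) (f : C -> C) :
  injective f -> {homo f : x y / R x y} -> {mono f : x y / R x y}.
Proof.
move=> f_inj f_homo a b; apply/idP/idP; last exact: f_homo.
pose S := [set p : C * C | R p.1 p.2].
pose F (p : C * C) := (f p.1, f p.2).
have F_inj : injective F by move=> [x1 x2] [y1 y2] [/f_inj -> /f_inj ->].
have /eqP F_S : F @: S == S.
  rewrite eqEcard (card_imset _ F_inj) leqnn andbT.
  by apply/subsetP => q /imsetP [p]; rewrite inE => Rp ->; rewrite inE; exact: f_homo.
move=> Rfab; have : (f a, f b) \in F @: S by rewrite F_S inE.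
by case/imsetP => -[x y]; rewrite inE => Rxy [/f_inj -> /f_inj ->].
Qed.

Definition nverts (t : ptree) := size (verts t).

Fixpoint ptree_cons_ind (P : ptree -> Prop) (P0 : P (Node [::]))
    (Pcons : forall c cs, P c -> P (Node cs) -> P (Node (c :: cs))) (t : ptree) : P t :=
  let: Node l := t in
  (fix branches l : P (Node l) :=
     if l is c :: cs then Pcons c cs (ptree_cons_ind P0 Pcons c) (branches cs)
     else P0) l.

Lemma verts_cons c cs :
  verts (Node (c :: cs)) = map shift_addr (verts (Node cs)) ++ map (cons 0) (verts c).
Proof. by []. Qed.

Lemma shift_addr_inj : injective shift_addr.
Proof. by case=> [|i p] [|j q] //= [-> ->]. Qed.

Lemma nverts_cons c cs : nverts (Node (c :: cs)) = nverts (Node cs) + nverts c.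
Proof. by rewrite /nverts verts_cons size_cat !size_map. Qed.

Lemma verts_root t : exists r, verts t = [::] :: r.
Proof.
by elim/ptree_cons_ind: t => [|c cs _ [r IH]]; [exists [::] | rewrite verts_cons IH; eexists].
Qed.

Lemma nverts_gt0 t : 0 < nverts t.
Proof. by have [r] := verts_root t; rewrite /nverts => ->. Qed.

Lemma nth_verts0 t : nth [::] (verts t) 0 = [::].
Proof. by have [r ->] := verts_root t. Qed.

Lemma verts_uniq t : uniq (verts t).
Proof.
elim/ptree_cons_ind: t => [|c cs IHc IHcs] //.
have cons0_inj : injective (cons 0) by move=> p q [].
rewrite verts_cons cat_uniq (map_inj_uniq shift_addr_inj) (map_inj_uniq cons0_inj).
rewrite IHcs IHc andbT /=.
by apply/hasPn => _ /mapP [p _ ->]; apply/mapP => -[[|[|i] q] _].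
Qed.

Lemma nth_verts_eq0 t i : i < nverts t -> (nth [::] (verts t) i == [::]) = (i == 0).
Proof.
move=> ltit; rewrite -[X in _ == X](nth_verts0 t) nth_uniq //.
  exact: nverts_gt0.
exact: verts_uniq.
Qed.

Lemma nth_verts_consl c cs i : i < nverts (Node cs) ->
  nth [::] (verts (Node (c :: cs))) i = shift_addr (nth [::] (verts (Node cs)) i).
Proof. by move=> lti; rewrite verts_cons nth_cat size_map lti (nth_map [::]). Qed.

Lemma nth_verts_consr c cs i : nverts (Node cs) <= i < nverts (Node (c :: cs)) ->
  nth [::] (verts (Node (c :: cs))) i = 0 :: nth [::] (verts c) (i - nverts (Node cs)).
Proof.
rewrite nverts_cons => /andP [lei lti].
rewrite verts_cons nth_cat size_map ltnNge lei (nth_map [::]) //.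
by rewrite -/(nverts _) ltn_subLR.
Qed.

Lemma strict_prefix_cons i j p q :
  strict_prefix (i :: p) (j :: q) = (i == j) && strict_prefix p q.
Proof.
rewrite /strict_prefix /= ltnS eqseq_cons [j == i]eq_sym.
by case: (i == j); case: (size p < size q).
Qed.

Lemma strict_prefix0s q : strict_prefix [::] q = (q != [::]).
Proof. by case: q. Qed.

Lemma strict_prefixs0 p : strict_prefix p [::] = false.
Proof. by case: p. Qed.

Lemma strict_prefix_shift p q :
  strict_prefix (shift_addr p) (shift_addr q) = strict_prefix p q.
Proof. by case: p => [|i p]; case: q => [|j q] //=; rewrite !strict_prefix_cons eqSS. Qed.

Lemma strict_prefix_shift0 p q : strict_prefix (shift_addr p) (0 :: q) = (p == [::]).
Proof. by case: p => [|i p] //=; rewrite strict_prefix_cons. Qed.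

Lemma strict_prefix_0shift p q : strict_prefix (0 :: p) (shift_addr q) = false.
Proof. by case: q => [|j q] //=; rewrite strict_prefix_cons. Qed.

Lemma strict_prefix_trans q p r :
  strict_prefix p q -> strict_prefix q r -> strict_prefix p r.
Proof.
rewrite /strict_prefix => /andP [ltpq /eqP pq] /andP [ltqr /eqP qr].
rewrite (ltn_trans ltpq ltqr) /= -{2}pq -qr.
by rewrite take_takel ?(ltnW ltpq).
Qed.

Lemma strict_prefix_total p q r : strict_prefix p r -> strict_prefix q r ->
  [|| p == q, strict_prefix p q | strict_prefix q p].
Proof.
rewrite /strict_prefix => /andP [_ /eqP pr] /andP [_ /eqP qr].
case: (ltngtP (size p) (size q)) => [lt|gt|eqpq] /=.
- have -> : take (size p) q = p by rewrite -qr take_takel ?(ltnW lt).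
  by rewrite eqxx orbT.
- have -> : take (size q) p = q by rewrite -pr take_takel ?(ltnW gt).
  by rewrite eqxx !orbT.
- by rewrite -pr -qr eqpq eqxx.
Qed.

(* Vertices are numbered by their position in [verts t], i.e. along <<<; the
   root is [0]. *)
Definition ancn (t : ptree) (i j : nat) : bool :=
  strict_prefix (nth [::] (verts t) i) (nth [::] (verts t) j).

(* The ancestor order of the tree obtained by grafting a tree with ancestor
   order [R1] onto vertex [v] of a tree with [n2] vertices and ancestor order
   [R2], the vertices of the latter being numbered first. *)
Definition graft_rel (R1 R2 : nat -> nat -> bool) (n2 v : nat) (i j : nat) : bool :=
  if j < n2 then (i < n2) && R2 i j
  else if i < n2 then (i == v) || R2 i v
  else R1 (i - n2) (j - n2).

Lemma ancn0s t j : j < nverts t -> ancn t 0 j = (j != 0).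
Proof. by move=> ltj; rewrite /ancn nth_verts0 strict_prefix0s nth_verts_eq0. Qed.

Lemma ancns0 t i : ancn t i 0 = false.
Proof. by rewrite /ancn nth_verts0 strict_prefixs0. Qed.

Lemma ancn_cons c cs i j : i < nverts (Node (c :: cs)) -> j < nverts (Node (c :: cs)) ->
  ancn (Node (c :: cs)) i j = graft_rel (ancn c) (ancn (Node cs)) (nverts (Node cs)) 0 i j.
Proof.
move=> lti ltj; rewrite /graft_rel /ancn.
case: ltnP => lej; case: ltnP => lei.
- by rewrite !nth_verts_consl // strict_prefix_shift.
- by rewrite (nth_verts_consr (i := i)) ?lei // nth_verts_consl // strict_prefix_0shift.
- rewrite (nth_verts_consr (i := j)) ?lej // nth_verts_consl // strict_prefix_shift0.
  by rewrite nth_verts_eq0 // nth_verts0 strict_prefixs0 orbF.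
- by rewrite (nth_verts_consr (i := i)) ?(nth_verts_consr (i := j)) ?lei ?lej // strict_prefix_cons.
Qed.

Record rel_isom (n : nat) (R R' : nat -> nat -> bool) (f g : nat -> nat) : Prop := RelIsom {
  isom_pos : 0 < n;
  isom_domf : forall i, i < n -> f i < n;
  isom_domg : forall i, i < n -> g i < n;
  isom_fK : forall i, i < n -> g (f i) = i;
  isom_gK : forall i, i < n -> f (g i) = i;
  isom_root : f 0 = 0;
  isom_rel : forall i j, i < n -> j < n -> R i j = R' (f i) (f j) }.

Definition rel_iso n R R' := exists f g, rel_isom n R R' f g.

Lemma rel_isom_id n (R R' : nat -> nat -> bool) : 0 < n ->
  (forall i j, i < n -> j < n -> R i j = R' i j) -> rel_isom n R R' id id.
Proof. by move=> n_gt0 RR'; constructor. Qed.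

Lemma rel_iso_eq n (R R' : nat -> nat -> bool) : 0 < n ->
  (forall i j, i < n -> j < n -> R i j = R' i j) -> rel_iso n R R'.
Proof. by move=> n_gt0 RR'; exists id, id; apply: rel_isom_id. Qed.

Lemma rel_iso_trans n R2 R1 R3 : rel_iso n R1 R2 -> rel_iso n R2 R3 -> rel_iso n R1 R3.
Proof.
move=> [f [g [n_gt0 Df Dg fK gK f0 fR]]] [f' [g' [_ Df' Dg' fK' gK' f0' fR']]].
exists (f' \o f), (g \o g'); constructor => //= [i lti|i lti|i lti|i lti||i j lti ltj].
- exact/Df'/Df.
- exact/Dg/Dg'.
- by rewrite fK' ?fK ?Df.
- by rewrite gK ?gK' ?Dg'.
- by rewrite f0 f0'.
- by rewrite fR // fR' ?Df.
Qed.

Ltac decide_comparisons :=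
  repeat match goal with
  | |- context [?a < ?b] =>
      first [ rewrite (_ : (a < b) = true); last by lia
            | rewrite (_ : (a < b) = false); last by lia ]
  | |- context [?a == ?b] =>
      first [ rewrite (_ : (a == b) = true); last by lia
            | rewrite (_ : (a == b) = false); last by lia ]
  end.

Lemma rel_iso_graft n1 n2 R1 R1' R2 R2' f2 g2 v : v < n2 ->
  rel_iso n1 R1 R1' -> rel_isom n2 R2 R2' f2 g2 ->
  rel_iso (n2 + n1) (graft_rel R1 R2 n2 v) (graft_rel R1' R2' n2 (f2 v)).
Proof.
move=> ltv [f1 [g1 [n1_gt0 Df1 Dg1 fK1 gK1 f10 fR1]]] [n2_gt0 Df2 Dg2 fK2 gK2 f20 fR2].
have f2_inj i j : i < n2 -> j < n2 -> (f2 i == f2 j) = (i == j).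
  by move=> lti ltj; apply/eqP/eqP => [eqf|-> //]; rewrite -(fK2 i) // eqf fK2.
exists (fun i => if i < n2 then f2 i else n2 + f1 (i - n2)).
exists (fun i => if i < n2 then g2 i else n2 + g1 (i - n2)).
constructor => [|i lti|i lti|i lti|i lti||i j lti ltj]; first lia.
- case: ifP => lein; first by have := Df2 i lein; lia.
  by have := Df1 (i - n2); lia.
- case: ifP => lein; first by have := Dg2 i lein; lia.
  by have := Dg1 (i - n2); lia.
- case: (ltnP i n2) => lein; first by rewrite Df2 // fK2.
  by decide_comparisons; rewrite addKn fK1; lia.
- case: (ltnP i n2) => lein; first by rewrite Dg2 // gK2.
  by decide_comparisons; rewrite addKn gK1; lia.
- by rewrite n2_gt0 f20.
- rewrite /graft_rel; case: (ltnP j n2) => lejn; case: (ltnP i n2) => lein.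
  + by rewrite !Df2 // fR2.
  + by decide_comparisons; rewrite Df2 // andbF.
  + by decide_comparisons; rewrite Df2 // f2_inj // fR2.
  + by decide_comparisons; rewrite !addKn fR1 //; lia.
Qed.

Lemma graft_rel_assoc Ra Rc Rt nt nc na v i j :
  v < nc -> i < nt + nc + na -> j < nt + nc + na ->
  graft_rel Ra (graft_rel Rc Rt nt 0) (nt + nc) (nt + v) i j =
  graft_rel (graft_rel Ra Rc nc v) Rt nt 0 i j.
Proof.
move=> ltv lti ltj; rewrite /graft_rel.
case: (ltnP i nt) => ?; case: (ltnP i (nt + nc)) => ?;
case: (ltnP j nt) => ?; case: (ltnP j (nt + nc)) => ?; decide_comparisons => //=;
  try (exfalso; lia); rewrite ?addKn ?subnDA //.
by congr (_ || _); apply/eqP/eqP; lia.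
Qed.

Lemma rel_iso_graft_swap Ra Rc Rt nt nc na v : v < nt -> 0 < nt ->
  rel_iso (nt + na + nc) (graft_rel Rc (graft_rel Ra Rt nt v) (nt + na) 0)
                         (graft_rel Ra (graft_rel Rc Rt nt 0) (nt + nc) v).
Proof.
move=> ltv nt_gt0.
exists (fun i => if i < nt then i else if i < nt + na then i + nc else i - na).
exists (fun i => if i < nt then i else if i < nt + nc then i + na else i - nc).
constructor => [|i lti|i lti|i lti|i lti||i j lti ltj]; first lia.
- by case: (ltnP i nt) => ?; case: (ltnP i (nt + na)) => ?; lia.
- by case: (ltnP i nt) => ?; case: (ltnP i (nt + nc)) => ?; lia.
- by case: (ltnP i nt) => ?; case: (ltnP i (nt + na)) => ?; decide_comparisons; lia.
- by case: (ltnP i nt) => ?; case: (ltnP i (nt + nc)) => ?; decide_comparisons; lia.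
- by rewrite nt_gt0.
- rewrite /graft_rel.
  case: (ltnP i nt) => ?; case: (ltnP i (nt + na)) => ?;
  case: (ltnP j nt) => ?; case: (ltnP j (nt + na)) => ?; try (exfalso; lia);
    decide_comparisons => //=; rewrite ?addKn ?subnDA; decide_comparisons => //=.
  all: by apply: f_equal2; lia.
Qed.

Lemma graft_at_cons0 a c cs p :
  graft_at a (Node (c :: cs)) (0 :: p) = Node (graft_at a c p :: cs).
Proof.
rewrite /=; do 2 f_equal.
have untouched k : [seq (if x.1 == 0 then graft_at a x.2 p else x.2)
                   | x <- zip (iota k.+1 (size cs)) cs] = cs.
  by elim: cs k => [|c' cs IH] k //=; rewrite IH.
exact: untouched.
Qed.

Lemma graft_at_consS a c cs i p :
  graft_at a (Node (c :: cs)) (i.+1 :: p) = lbutcher c (graft_at a (Node cs) (i :: p)).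
Proof.
rewrite /=; do 2 f_equal.
have shifted k : [seq (if x.1 == i.+1 then graft_at a x.2 p else x.2)
                 | x <- zip (iota k.+1 (size cs)) cs] =
                 [seq (if x.1 == i then graft_at a x.2 p else x.2)
                 | x <- zip (iota k (size cs)) cs].
  by elim: cs k => [|c' cs IH] k //=; rewrite eqSS IH.
exact: shifted.
Qed.

Lemma mem_verts_cons0 c cs p : (0 :: p \in verts (Node (c :: cs))) = (p \in verts c).
Proof.
rewrite verts_cons mem_cat (mem_map (fun p q => @congr1 _ _ behead (0 :: p) (0 :: q))).
by case: mapP => //= -[[|[|i] q]].
Qed.

Lemma mem_verts_consS c cs i p :
  (i.+1 :: p \in verts (Node (c :: cs))) = (i :: p \in verts (Node cs)).
Proof.
rewrite verts_cons mem_cat -[i.+1 :: p]/(shift_addr (i :: p)) (mem_map shift_addr_inj).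
by case: mapP => [[q _ []]|]; rewrite ?orbF.
Qed.

Lemma index_verts_cons0 c cs p :
  index (0 :: p) (verts (Node (c :: cs))) = nverts (Node cs) + index p (verts c).
Proof.
rewrite verts_cons index_cat size_map index_map; last by move=> q q' [].
by case: mapP => // -[[|[|i] q]].
Qed.

Lemma index_verts_consS c cs i p : i :: p \in verts (Node cs) ->
  index (i.+1 :: p) (verts (Node (c :: cs))) = index (i :: p) (verts (Node cs)).
Proof.
move=> ip_in; rewrite verts_cons -[i.+1 :: p]/(shift_addr (i :: p)) index_cat.
by rewrite (mem_map shift_addr_inj) ip_in index_map //; exact: shift_addr_inj.
Qed.

Definition graft_spec (a b : ptree) (w : address) :=
  nverts (graft_at a b w) = nverts b + nverts a /\
  rel_iso (nverts b + nverts a) (ancn (graft_at a b w))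
          (graft_rel (ancn a) (ancn b) (nverts b) (index w (verts b))).

Lemma graft_spec_root a b : graft_spec a b [::].
Proof.
case: b => l; rewrite /graft_spec; have [r verts_l] := verts_root (Node l).
have nvE : nverts (graft_at a (Node l) [::]) = nverts (Node l) + nverts a by exact: nverts_cons.
have -> : index [::] (verts (Node l)) = 0 by rewrite verts_l.
split=> //; rewrite -nvE.
by apply: rel_iso_eq => [|i j lti ltj]; [exact: nverts_gt0 | exact: ancn_cons].
Qed.

Lemma graft_spec_cons0 a c cs p : p \in verts c -> graft_spec a c p ->
  graft_spec a (Node (c :: cs)) (0 :: p).
Proof.
move=> p_in [nvE iso_g].
rewrite /graft_spec graft_at_cons0 index_verts_cons0 !nverts_cons nvE addnA.
split=> //; set g := graft_at a c p in nvE iso_g *.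
set ncs := nverts (Node cs); set nc := nverts c; set na := nverts a.
have ncs_gt0 : 0 < ncs by exact: nverts_gt0.
have lt_idx : index p (verts c) < nc by rewrite index_mem.
apply: (@rel_iso_trans _ (graft_rel (ancn g) (ancn (Node cs)) ncs 0)).
  apply: rel_iso_eq => [|i j lti ltj]; first by lia.
  by rewrite ancn_cons // nverts_cons nvE addnA.
apply: (@rel_iso_trans _
  (graft_rel (graft_rel (ancn a) (ancn c) nc (index p (verts c))) (ancn (Node cs)) ncs 0)).
  by rewrite -addnA; apply: (@rel_iso_graft _ _ _ _ _ _ id id).
apply: (@rel_iso_trans _ (graft_rel (ancn a) (graft_rel (ancn c) (ancn (Node cs)) ncs 0)
                                    (ncs + nc) (ncs + index p (verts c)))).
  by apply: rel_iso_eq => [|i j lti ltj]; [lia | rewrite (@graft_rel_assoc _ _ _ _ _ na)].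
apply: (@rel_iso_graft _ _ _ _ _ _ id id (ncs + index p (verts c))); first by lia.
  by apply: rel_iso_eq => //; exact: nverts_gt0.
apply: rel_isom_id => [|i j lti ltj]; first by lia.
by rewrite ancn_cons // nverts_cons.
Qed.

Lemma graft_spec_consS a c cs i p : i :: p \in verts (Node cs) ->
  graft_spec a (Node cs) (i :: p) -> graft_spec a (Node (c :: cs)) (i.+1 :: p).
Proof.
move=> ip_in; rewrite /graft_spec graft_at_consS (index_verts_consS _ ip_in).
case: (graft_at a (Node cs) (i :: p)) => cs' [nvE iso_g] /=.
rewrite !nverts_cons nvE; split; first by lia.
set idx := index (i :: p) (verts (Node cs)) in iso_g *.
set ncs := nverts (Node cs) in nvE iso_g *; set nc := nverts c; set na := nverts a in nvE iso_g *.
have ncs_gt0 : 0 < ncs by exact: nverts_gt0.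
have nc_gt0 : 0 < nc by exact: nverts_gt0.
have lt_idx : idx < ncs by rewrite index_mem.
apply: (@rel_iso_trans _ (graft_rel (ancn c) (ancn (Node cs')) (ncs + na) 0)).
  apply: rel_iso_eq => [|i' j lti ltj]; first by lia.
  by rewrite ancn_cons ?nverts_cons ?nvE //; lia.
apply: (@rel_iso_trans _ (graft_rel (ancn c) (graft_rel (ancn a) (ancn (Node cs)) ncs idx)
                                    (ncs + na) 0)).
  have [f [g isom_g]] := iso_g.
  have lt0 : 0 < ncs + na by lia.
  have iso_c : rel_iso nc (ancn c) (ancn c) by apply: rel_iso_eq.
  have := rel_iso_graft lt0 iso_c isom_g.
  by rewrite (isom_root isom_g) -addnA [na + nc]addnC addnA.
have swap := rel_iso_graft_swap (ancn a) (ancn c) (ancn (Node cs)) nc na lt_idx ncs_gt0.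
rewrite -addnA [na + nc]addnC addnA in swap.
apply: rel_iso_trans swap _.
apply: (@rel_iso_graft _ _ _ _ _ _ id id idx); first by lia.
  by apply: rel_iso_eq => //; exact: nverts_gt0.
apply: rel_isom_id => [|i' j lti ltj]; first by lia.
by rewrite ancn_cons // nverts_cons.
Qed.

Lemma graft_at_spec a b w : w \in verts b -> graft_spec a b w.
Proof.
elim: w b => [|i p IHp] b w_in; first exact: graft_spec_root.
elim: i b w_in => [|i IHi] [[|c cs]] //; rewrite ?mem_verts_cons0 ?mem_verts_consS => w_in.
- by apply: graft_spec_cons0 (IHp _ w_in).
- by apply: graft_spec_consS (IHi _ w_in).
Qed.

(** * Admissible orders *)

(* Up to the numbering of vertices, these are the orders [phi(<)] on [V t] for
   the bijections [phi] counted by [btilde]. *)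
Record admissible (t : ptree) (R : nat -> nat -> bool) : Prop := Admissible {
  adm_trans : forall i j k, i < nverts t -> j < nverts t -> k < nverts t ->
    R i j -> R j k -> R i k;
  adm_chain : forall i j k, i < nverts t -> j < nverts t -> k < nverts t ->
    R i k -> R j k -> [|| i == j, R i j | R j i];
  adm_anc : forall i j, i < nverts t -> j < nverts t -> ancn t i j -> R i j;
  adm_lt : forall i j, i < nverts t -> j < nverts t -> R i j -> i < j }.

Lemma admissible_graft_rel c cs R1 R2 v : v < nverts (Node cs) ->
  admissible c R1 -> admissible (Node cs) R2 ->
  admissible (Node (c :: cs)) (graft_rel R1 R2 (nverts (Node cs)) v).
Proof.
move=> ltv [T1 C1 A1 L1] [T2 C2 A2 L2].
split; rewrite nverts_cons /graft_rel; set n2 := nverts (Node cs); set n1 := nverts c.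
- move=> i j k lti ltj ltk.
  case: (ltnP i n2) => ?; case: (ltnP j n2) => ?; case: (ltnP k n2) => ? //=;
    decide_comparisons => //=.
  + exact: T2.
  + move=> Rij /orP [/eqP eqjv|Rjv]; first by rewrite -eqjv Rij orbT.
    by rewrite (T2 i j v) ?orbT.
  + by apply: T1; lia.
- move=> i j k lti ltj ltk.
  case: (ltnP i n2) => ?; case: (ltnP j n2) => ?; case: (ltnP k n2) => ? //=;
    decide_comparisons => //=.
  + exact: C2.
  + move=> /orP [/eqP -> |Riv] /orP [/eqP -> |Rjv]; rewrite ?eqxx ?Riv ?Rjv ?orbT //.
    exact: (C2 i j v).
  + by move=> ->.
  + move=> Rik Rjk.
    have /orP [/eqP eqij|->] : [|| i - n2 == j - n2, R1 (i - n2) (j - n2) | R1 (j - n2) (i - n2)].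
      by apply: (C1 _ _ (k - n2)) => //; lia.
    * by apply/orP; left; apply/eqP; lia.
    * by rewrite orbT.
- move=> i j lti ltj; rewrite ancn_cons ?nverts_cons // /graft_rel.
  case: (ltnP i n2) => ?; case: (ltnP j n2) => ? //=; decide_comparisons => //=.
  + exact: A2.
  + rewrite ancns0 orbF => /eqP ->.
    case: (eqVneq v 0) => [-> //|nzv].
    by rewrite (A2 0 v) ?orbT // ?ancn0s //; lia.
  + by apply: A1; lia.
- move=> i j lti ltj.
  case: (ltnP i n2) => ?; case: (ltnP j n2) => ? //=; decide_comparisons => //=.
  + exact: L2.
  + by move=> Rij; have := L1 (i - n2) (j - n2); lia.
Qed.

Section AdmissibleCons.

Variables (c : ptree) (cs : seq ptree) (R : nat -> nat -> bool).
Hypothesis admR : admissible (Node (c :: cs)) R.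

Let n2 := nverts (Node cs).
Let n1 := nverts c.
Let n_cons : nverts (Node (c :: cs)) = n2 + n1 := nverts_cons c cs.
Let n1_gt0 : 0 < n1 := nverts_gt0 c.
Let n2_gt0 : 0 < n2 := nverts_gt0 (Node cs).

Lemma admissible_consr : admissible (Node cs) R.
Proof.
case: admR; rewrite n_cons => T C A L; split.
- by move=> i j k *; apply: (T _ j); lia.
- by move=> i j k *; apply: C; lia.
- move=> i j lti ltj anc_ij; apply: A; try lia.
  by rewrite ancn_cons -/n2 ?n_cons /graft_rel ?lti ?ltj //; lia.
- by move=> i j *; apply: L; lia.
Qed.

Lemma admissible_consl : admissible c (fun i j => R (n2 + i) (n2 + j)).
Proof.
case: admR; rewrite n_cons => T C A L; split; rewrite -/n1.
- by move=> i j k *; apply: (T _ (n2 + j)); lia.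
- move=> i j k lti ltj ltk Rik Rjk.
  by rewrite -(eqn_add2l n2); apply: (C _ _ (n2 + k)) => //; lia.
- move=> i j lti ltj anc_ij; apply: A; try lia.
  by rewrite ancn_cons -/n2 ?n_cons /graft_rel; try lia; decide_comparisons; rewrite !addKn.
- by move=> i j lti ltj Rij; have := L _ _ _ _ Rij; lia.
Qed.

(* The vertex [u] is the largest vertex of [Node cs] below the root [n2] of
   the grafted branch [c]. *)
Lemma admissible_cons_attach : exists2 u, u < n2 &
  forall i j, i < n2 -> n2 <= j < n2 + n1 -> R i j = (i == u) || R i u.
Proof.
case: admR; rewrite n_cons => T C A L.
have R_n2 j : n2 < j < n2 + n1 -> R n2 j.
  case/andP=> gt_j lt_j; apply: A; try lia; rewrite ancn_cons -/n2 ?n_cons /graft_rel; try lia.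
  by decide_comparisons; rewrite subnn ancn0s //; lia.
pose P i := (i < n2) && R i n2.
have ex_P : exists i, P i.
  exists 0; rewrite /P n2_gt0; apply: A; try lia.
  by rewrite ancn_cons -/n2 ?n_cons /graft_rel; try lia; decide_comparisons.
have ub_P i : P i -> i <= n2 by case/andP=> /ltnW.
case: (ex_maxnP ex_P ub_P) => u /andP [lt_u Run] max_u.
exists u => // i j lti /andP [le_j lt_j].
have R_below k : k < n2 -> R k j = R k n2.
  move=> ltk; case: (eqVneq j n2) => [-> //|neq_j].
  have Rn2j : R n2 j by apply: R_n2; lia.
  apply/idP/idP => [Rkj|Rkn]; last by apply: (T _ n2); lia.
  have /or3P [/eqP|//|Rn2k] := C k n2 j ltac:(lia) ltac:(lia) ltac:(lia) Rkj Rn2j; first by lia.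
  by have := L n2 k ltac:(lia) ltac:(lia) Rn2k; lia.
rewrite R_below //; apply/idP/idP => [Rin|/orP [/eqP -> //|Riu]]; last by apply: (T _ u); lia.
have /or3P [->|Riu|Rui] := C i u n2 ltac:(lia) ltac:(lia) ltac:(lia) Rin Run; rewrite ?Riu ?orbT //.
have := max_u i; rewrite /P lti Rin => /(_ isT).
by have := L u i ltac:(lia) ltac:(lia) Rui; lia.
Qed.

End AdmissibleCons.

Definition eqrel_on n (R R' : nat -> nat -> bool) :=
  [forall i : 'I_n, forall j : 'I_n, R i j == R' i j].

Lemma eqrel_onP n R R' :
  reflect (forall i j, i < n -> j < n -> R i j = R' i j) (eqrel_on n R R').
Proof.
apply: (iffP forallP) => [eqR i j lti ltj|eqR i].
  by have /forallP /(_ (Ordinal ltj)) /eqP := eqR (Ordinal lti).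
by apply/forallP => j; rewrite eqR.
Qed.

Lemma eqrel_on_graft_rel n1 n2 (R R1 R2 : nat -> nat -> bool) v u :
  0 < n1 -> v < n2 -> u < n2 ->
  (forall i j, i < n2 + n1 -> j < n2 + n1 -> R i j -> i < j) ->
  (forall i j, i < n2 -> n2 <= j < n2 + n1 -> R i j = (i == u) || R i u) ->
  eqrel_on (n2 + n1) (graft_rel R1 R2 n2 v) R =
  [&& eqrel_on n1 R1 (fun i j => R (n2 + i) (n2 + j)), eqrel_on n2 R2 R & v == u].
Proof.
move=> n1_gt0 ltv ltu Rlt Ru.
have R_down i j : n2 <= i < n2 + n1 -> j < n2 -> R i j = false.
  by case/andP=> le_i lt_i ltj; apply/negP => /Rlt; lia.
apply/eqrel_onP/and3P => [eqR|[/eqrel_onP eqR1 /eqrel_onP eqR2 /eqP ->] i j lti ltj].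
- have eqR2 i j : i < n2 -> j < n2 -> R2 i j = R i j.
    by move=> lti ltj; rewrite -eqR ?/graft_rel ?lti ?ltj //; lia.
  split.
  + apply/eqrel_onP => i j lti ltj; rewrite -eqR; try lia.
    by rewrite /graft_rel; decide_comparisons; rewrite !addKn.
  + exact/eqrel_onP.
  + have Rvn2 : R v n2 by rewrite -eqR ?/graft_rel; decide_comparisons; rewrite ?eqxx //; lia.
    have Run2 : R u n2 by rewrite Ru ?eqxx //; lia.
    rewrite -eqR /graft_rel in Run2; try lia; move: Run2; decide_comparisons.
    rewrite Ru in Rvn2; try lia.
    case/orP: Rvn2 => [//|Rvu]; rewrite eq_sym; case/orP => [//|R2uv].
    rewrite eqR2 // in R2uv; have := Rlt v u ltac:(lia) ltac:(lia) Rvu.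
    by have := Rlt u v ltac:(lia) ltac:(lia) R2uv; lia.
- rewrite /graft_rel; case: (ltnP j n2) => ltj2; case: (ltnP i n2) => lti2 /=.
  + by rewrite eqR2.
  + by rewrite R_down //; lia.
  + by rewrite Ru ?eqR2 //; lia.
  + by rewrite eqR1; try lia; congr R; lia.
Qed.

(** * Labelling the terms of Psi by admissible orders *)

Definition rel_iso_witness n (R R' : nat -> nat -> bool) : (nat -> nat) * (nat -> nat) :=
  epsilon (inhabits (id, id)) (fun fg => rel_isom n R R' fg.1 fg.2).

Lemma rel_iso_witnessP n R R' : rel_iso n R R' ->
  rel_isom n R R' (rel_iso_witness n R R').1 (rel_iso_witness n R R').2.
Proof.
case=> f [g isom_fg].
by apply: (epsilon_spec _ (fun fg => rel_isom n R R' fg.1 fg.2)); exists (f, g).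
Qed.

Definition labelled_tree := (ptree * (nat -> nat -> bool))%type.

(* [x.1] is to be a term of [Psi t] and [x.2] an order on the vertices of [t]
   isomorphic to its ancestor order. *)
Definition label_of (t : ptree) (x : labelled_tree) : Prop :=
  [/\ nverts x.1 = nverts t, rel_iso (nverts t) (ancn x.1) x.2 & admissible t x.2].

Definition admissible_labelling (t : ptree) (L : seq labelled_tree) : Prop :=
  [/\ map fst L = Psi t, Forall (label_of t) L &
      forall R, admissible t R -> count (fun x => eqrel_on (nverts t) x.2 R) L = 1].

(* The label of [x1] is grafted onto the vertex corresponding to [w] under the
   isomorphism labelling [x2]. *)
Definition graft_labelled (n2 : nat) (x1 x2 : labelled_tree) : seq labelled_tree :=
  let f := (rel_iso_witness n2 (ancn x2.1) x2.2).1 in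
  [seq (graft_at x1.1 x2.1 w, graft_rel x1.2 x2.2 n2 (f (index w (verts x2.1))))
  | w <- verts x2.1].

Definition cons_labelling (n2 : nat) (L1 L2 : seq labelled_tree) : seq labelled_tree :=
  flatten [seq graft_labelled n2 x1 x2 | x1 <- L1, x2 <- L2].

Lemma map_fst_cons_labelling n2 L1 L2 :
  map fst (cons_labelling n2 L1 L2) = lgraft_lin (map fst L1) (map fst L2).
Proof.
rewrite /cons_labelling /lgraft_lin map_flatten map_allpairs allpairs_mapl allpairs_mapr.
by congr flatten; apply: eq_allpairs => x1 x2; rewrite /lgraft -map_comp.
Qed.

Section LabellingCons.

Variables (c : ptree) (cs : seq ptree).

Lemma label_of_graft x1 x2 : label_of c x1 -> label_of (Node cs) x2 ->
  Forall (label_of (Node (c :: cs))) (graft_labelled (nverts (Node cs)) x1 x2).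
Proof.
move=> [nv1 iso1 adm1] [nv2 iso2 adm2].
apply: Forall_map_in => w w_in.
have [nvE isoE] := graft_at_spec x1.1 w_in; rewrite nv1 nv2 in nvE isoE.
have isom2 := rel_iso_witnessP iso2.
have lt_idx : index w (verts x2.1) < nverts (Node cs) by rewrite -nv2 index_mem.
split=> /=; rewrite ?nverts_cons.
- exact: nvE.
- exact: rel_iso_trans isoE (rel_iso_graft lt_idx iso1 isom2).
- by apply: admissible_graft_rel => //; apply: (isom_domf isom2).
Qed.

Lemma count_graft_labelled R x1 x2 :
  admissible (Node (c :: cs)) R -> label_of (Node cs) x2 ->
  count (fun x => eqrel_on (nverts (Node (c :: cs))) x.2 R)
        (graft_labelled (nverts (Node cs)) x1 x2) =
  eqrel_on (nverts c) x1.2 (fun i j => R (nverts (Node cs) + i) (nverts (Node cs) + j)) &&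
  eqrel_on (nverts (Node cs)) x2.2 R.
Proof.
set n2 := nverts (Node cs); set n1 := nverts c.
move=> admR [nv2 iso2 _]; have [u ltu Ru] := admissible_cons_attach admR.
have [_ Df Dg fK gK _ _] := rel_iso_witnessP iso2.
rewrite count_map /preim /=.
rewrite (count_index_bij
  (fun v => eqrel_on (nverts (Node (c :: cs))) (graft_rel x1.2 x2.2 n2 v) R)
  (verts_uniq x2.1) nv2 Df Dg fK gK).
rewrite (@eq_in_count _ _ (fun v => (eqrel_on n1 x1.2 (fun i j => R (n2 + i) (n2 + j)) &&
                                   eqrel_on n2 x2.2 R) && (v == u))); last first.
  move=> v; rewrite mem_iota => /andP [_ ltv].
  have Rlt := adm_lt admR; rewrite nverts_cons in Rlt.
  by rewrite nverts_cons (eqrel_on_graft_rel x1.2 x2.2 (nverts_gt0 c) ltv ltu Rlt Ru) andbA.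
case: (_ && _) => /=; last exact: count_pred0.
by rewrite (count_uniq_mem _ (iota_uniq 0 n2)) mem_iota add0n ltu.
Qed.

Lemma admissible_labelling_cons L1 L2 :
  admissible_labelling c L1 -> admissible_labelling (Node cs) L2 ->
  admissible_labelling (Node (c :: cs)) (cons_labelling (nverts (Node cs)) L1 L2).
Proof.
move=> [fst1 lab1 one1] [fst2 lab2 one2]; split.
- by rewrite map_fst_cons_labelling fst1 fst2.
- by apply: Forall_flatten; apply: Forall_allpairs lab1 lab2; exact: label_of_graft.
move=> R admR; rewrite count_sum big_flatten /= big_allpairs_dep /=.
have inner x1 : \sum_(x2 <- L2) \sum_(x <- graft_labelled (nverts (Node cs)) x1 x2)
                   eqrel_on (nverts (Node (c :: cs))) x.2 R =
                eqrel_on (nverts c) x1.2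
                  (fun i j => R (nverts (Node cs) + i) (nverts (Node cs) + j)).
  under eq_bigr => x2 _ do rewrite -count_sum.
  rewrite (eq_big_Forall _ _ (Forall_impl _ (fun x2 => count_graft_labelled x1 admR) lab2)).
  rewrite -count_sum; case: (eqrel_on _ _ _) => /=; last exact: count_pred0.
  exact/one2/(admissible_consr admR).
by rewrite (eq_bigr _ (fun x1 _ => inner x1)) -count_sum; apply/one1/(admissible_consl admR).
Qed.

End LabellingCons.

Lemma Psi_admissible_labelling t : exists L, admissible_labelling t L.
Proof.
elim/ptree_cons_ind: t => [|c cs [L1 adm1] [L2 adm2]]; last first.
  by exists (cons_labelling (nverts (Node cs)) L1 L2); apply: admissible_labelling_cons.
have adm_bullet R : admissible bullet R -> R 0 0 = false.
  by move=> admR; apply/negP => /(@adm_lt _ _ admR 0 0 isT isT).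
exists [:: (bullet, fun _ _ => false)]; split=> //.
  constructor=> //; split=> //; first by apply: rel_iso_eq => // -[|i] [|j].
  by split=> // -[|i] [|j] // [|k].
move=> R /adm_bullet R00; rewrite /= addn0.
suff -> : eqrel_on (nverts bullet) (fun _ _ => false) R by [].
by apply/eqrel_onP => -[|i] [|j].
Qed.

(** * Counting bijections *)

Lemma sym_isos s : sym s = #|isos (@anc s) (@anc s)|.
Proof.
apply: eq_card => f; rewrite !inE; apply: andb_id2l => /bijbP /bij_inj f_inj.
apply/forallP/forallP => f_homo a; apply/forallP => b.
  have f_homo' : {homo f : x y / anc s x y} by move=> x y; exact/implyP/(forallP (f_homo x)).
  by rewrite (fin_homo_mono f_inj f_homo').
by apply/implyP => Rab; rewrite -(eqP (forallP (f_homo a) b)).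
Qed.

Lemma sym_gt0 s : 0 < sym s.
Proof.
apply/card_gt0P; exists [ffun x => x]; rewrite inE; apply/andP; split.
  by apply/bijbP; exists id => x; rewrite ffunE.
by apply/forallP => a; apply/forallP => b; apply/implyP; rewrite !ffunE.
Qed.

Lemma card_isos_rel_iso u s n (R : nat -> nat -> bool) :
  nverts u = n -> rel_iso n (ancn u) R ->
  #|isos (@anc s) (fun i j : 'I_n => R i j)| = np_iso u s * sym s.
Proof.
move=> <- [f [g [_ Df Dg fK gK _ fR]]].
pose k (a : V u) : V u := Ordinal (Df a (ltn_ord a)).
pose k' (a : V u) : V u := Ordinal (Dg a (ltn_ord a)).
have k_bij : bijective k by exists k' => a; apply: val_inj; rewrite /= ?fK ?gK.
have k_mono : {mono k : x y / anc u x y >-> R x y} by move=> x y; rewrite /= -fR.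
rewrite -(card_isos_mono (@anc s) k_bij k_mono).
case np_us: (np_iso u s); rewrite ?mul1n ?mul0n.
  have [h /and3P [/bijbP h_bij h_incr h_inv]] := existsP np_us.
  have := increasing_inv_increasingE (@anc u) (@anc s) h; rewrite h_incr h_inv => /esym h_iso.
  have h_mono : {mono h : x y / anc u x y >-> anc s x y}.
    by move=> x y; rewrite (eqP (forallP (forallP h_iso x) y)).
  by rewrite sym_isos (card_isos_mono _ h_bij h_mono).
apply/eqP; rewrite eqn0Ngt; apply/negP => /card_gt0P [phi]; rewrite inE.
case/andP => /bijbP [psi phiK psiK] /forallP phi_iso.
suff : np_iso u s by rewrite np_us.
apply/existsP; exists [ffun x => psi x].
rewrite increasing_inv_increasingE; apply/andP; split.
  by apply/bijbP; exists phi => x; rewrite ffunE ?phiK ?psiK.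
apply/forallP => a; apply/forallP => b; rewrite !ffunE.
by rewrite (eqP (forallP (phi_iso (psi a)) (psi b))) !psiK.
Qed.

Lemma lllE t (i j : V t) : lll t i j = (i < j).
Proof. by rewrite /lll /vtx !index_uniq ?verts_uniq. Qed.

Lemma vtx_inj t : injective (vtx t).
Proof.
move=> a b eq_ab; apply/val_inj/eqP.
by rewrite -(nth_uniq [::] (ltn_ord a) (ltn_ord b) (verts_uniq t)); apply/eqP.
Qed.

Lemma bij_ord_surj n m (phi : 'I_n -> 'I_m) i : bijective phi -> i < m ->
  exists a, nat_of_ord (phi a) = i.
Proof. by move=> [phi' _ phi'K] lti; exists (phi' (Ordinal lti)); rewrite phi'K. Qed.

Definition image_rel s t (phi : {ffun V s -> V t}) (i j : nat) : bool :=
  [exists a, exists b, [&& nat_of_ord (phi a) == i, nat_of_ord (phi b) == j & anc s a b]].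

Lemma image_relE s t (phi : {ffun V s -> V t}) a b :
  injective phi -> image_rel phi (phi a) (phi b) = anc s a b.
Proof.
move=> phi_inj; apply/existsP/idP => [[a' /existsP [b' /and3P [/eqP ea /eqP eb]]]|anc_ab].
  by rewrite (phi_inj _ _ (val_inj ea)) (phi_inj _ _ (val_inj eb)).
by exists a; apply/existsP; exists b; rewrite !eqxx.
Qed.

Lemma admissible_image_rel s t (phi : {ffun V s -> V t}) :
  bijb phi -> increasing (@anc s) (@lll t) phi -> inv_increasing (@anc t) (@anc s) phi ->
  admissible t (image_rel phi).
Proof.
move=> /bijbP phi_bij /forallP phi_incr /forallP phi_inv; have phi_inj := bij_inj phi_bij.
split=> [i j k|i j k|i j|i j] lti ltj.
- move=> ltk; have [a <-] := bij_ord_surj phi_bij lti; have [b <-] := bij_ord_surj phi_bij ltj.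
  have [c <-] := bij_ord_surj phi_bij ltk; rewrite !image_relE //; exact: strict_prefix_trans.
- move=> ltk; have [a <-] := bij_ord_surj phi_bij lti; have [b <-] := bij_ord_surj phi_bij ltj.
  have [c <-] := bij_ord_surj phi_bij ltk; rewrite !image_relE // => anc_ac anc_bc.
  case/or3P: (strict_prefix_total anc_ac anc_bc) => [/eqP /vtx_inj ->|anc_ab|anc_ba].
  + by rewrite eqxx.
  + by apply/or3P/Or32.
  + by apply/or3P/Or33.
- have [a <-] := bij_ord_surj phi_bij lti; have [b <-] := bij_ord_surj phi_bij ltj.
  rewrite image_relE // => anc_ab.
  have /forallP /(_ a) /forallP /(_ b) /implyP := implyP (forallP (phi_inv (phi a)) (phi b)) anc_ab.
  by apply; rewrite !eqxx.
- have [a <-] := bij_ord_surj phi_bij lti; have [b <-] := bij_ord_surj phi_bij ltj.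
  by rewrite image_relE // -lllE => anc_ab; exact: (implyP (forallP (phi_incr a) b)).
Qed.

Lemma eqrel_on_image_rel s t (phi : {ffun V s -> V t}) R : bijb phi ->
  eqrel_on (nverts t) R (image_rel phi) = [forall a, forall b, anc s a b == R (phi a) (phi b)].
Proof.
move=> /bijbP phi_bij; have phi_inj := bij_inj phi_bij.
apply/eqrel_onP/forallP => [eqR a|phi_iso i j lti ltj].
  by apply/forallP => b; rewrite eqR // image_relE.
have [a <-] := bij_ord_surj phi_bij lti; have [b <-] := bij_ord_surj phi_bij ltj.
by rewrite image_relE // (eqP (forallP (phi_iso a) b)).
Qed.

Lemma admissible_iso_valid s t (phi : {ffun V s -> V t}) R :
  admissible t R -> [forall a, forall b, anc s a b == R (phi a) (phi b)] ->
  increasing (@anc s) (@lll t) phi && inv_increasing (@anc t) (@anc s) phi.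
Proof.
move=> [_ _ R_anc R_lt] /forallP phi_iso.
apply/andP; split; apply/forallP => x; apply/forallP => y; apply/implyP => rxy.
  by rewrite lllE; apply: R_lt => //; rewrite -(eqP (forallP (phi_iso x) y)).
apply/forallP => a; apply/forallP => b; apply/implyP => /andP [/eqP fa /eqP fb].
by rewrite (eqP (forallP (phi_iso a) b)) fa fb; exact: R_anc.
Qed.

Lemma btilde_alpha s t : btilde s t = alpha s t * sym s.
Proof.
have [L [fstL labL oneL]] := Psi_admissible_labelling t.
pose valid (phi : {ffun V s -> V t}) :=
  [&& bijb phi, increasing (@anc s) (@lll t) phi & inv_increasing (@anc t) (@anc s) phi].
(* A valid [phi] is counted once, by the term labelled with its image order. *)
transitivity (\sum_phi \sum_(x <- L) (valid phi && eqrel_on (nverts t) x.2 (image_rel phi))).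
  rewrite /btilde -sum1_card big_mkcond /=; apply: eq_bigr => phi _; rewrite inE -/(valid phi).
  rewrite -count_sum; case valid_phi: (valid phi) => /=; last by rewrite count_pred0.
  by case/and3P: valid_phi => *; rewrite oneL //; exact: admissible_image_rel.
rewrite exchange_big /=.
transitivity (\sum_(x <- L) np_iso x.1 s * sym s); last first.
  by rewrite -big_distrl /= -count_sum /alpha -fstL count_map.
apply: eq_big_Forall; apply: Forall_impl labL => x [nvx isox admx].
rewrite -(card_isos_rel_iso s nvx isox) -sum1_card [RHS]big_mkcond /=; apply: eq_bigr => phi _.
rewrite inE; case phi_bij: (bijb phi); rewrite /valid phi_bij //= eqrel_on_image_rel //.
by case phi_iso: [forall a, _]; rewrite ?andbF ?andbT ?(admissible_iso_valid admx phi_iso).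
Qed.

Local Open Scope ring_scope.

Theorem theorem2p4 (tau s : ptree) :
  (alpha s tau)%:R = (btilde s tau)%:R / (sym s)%:R :> rat.
Proof.
by rewrite btilde_alpha natrM mulfK // pnatr_eq0 -lt0n sym_gt0.
Qed.
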